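(* For any graph $G$ on $n\ge1$ vertices and any $\lambda>0$, \[ \frac{\alpha(G)}{\overline\alpha_G(\lambda)}\;\ge\;1+\frac{\alpha(G)}{\lambda n}, \] or equivalently $P_G(\lambda)\ge\left(\frac{\lambda}{\alpha(G)}+\frac1n\right)P_G'(\lambda)$. Equality holds when $G$ is a disjoint union of copies of $K_r$, for any $r\ge1$.
   Context: $\alpha(G)$ is the maximum size of an independent set of $G$. $P_G(\lambda)=\sum_J\lambda^{|J|}$ over all independent sets $J$ of $G$ (including the empty set), and $\overline\alpha_G(\lambda)=\lambda P_G'(\lambda)/P_G(\lambda)$ is the expected size of an independent set drawn from the hard-core model $\Pr[J]=\lambda^{|J|}/P_G(\lambda)$. $K_r$ is the complete graph on $r$ vertices. *)

From HB Require Import structures.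
From mathcomp Require Import all_boot all_order all_algebra.
Set Implicit Arguments. Unset Strict Implicit. Unset Printing Implicit Defensive.
Import Order.TTheory GRing.Theory Num.Theory.

Definition simple_graph (T : finType) (e : rel T) : Prop :=
  symmetric e /\ irreflexive e.

Definition independent (T : finType) (e : rel T) (J : {set T}) : bool :=
  [forall x in J, forall y in J, ~~ e x y].

Definition indep_num (T : finType) (e : rel T) : nat :=
  \max_(J : {set T} | independent e J) #|J|.

Local Open Scope ring_scope.

Definition indep_poly (R : nzRingType) (T : finType) (e : rel T) : {poly R} :=
  \sum_(J : {set T} | independent e J) 'X^#|J|.

(* Expected size of an independent set in the hard-core model:
   lambda P_G'(lambda) / P_G(lambda). *)
Definition avg_indep (R : fieldType) (T : finType) (e : rel T) (lam : R) : R :=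
  lam * (indep_poly R e)^`().[lam] / (indep_poly R e).[lam].

Definition disjoint_union_of_K (T : finType) (e : rel T) (r : nat) : Prop :=
  exists (m : nat) (f : T -> 'I_m),
    (forall x y, e x y = (x != y) && (f x == f y)) /\
    (forall x, #|[set y | f y == f x]| = r).

From HB Require Import structures.
From mathcomp Require Import all_boot all_order all_algebra.
From mathcomp Require Import ring lra.
Import Order.TTheory GRing.Theory Num.Theory.
Set Implicit Arguments. Unset Strict Implicit. Unset Printing Implicit Defensive.

(* For an independent set J write N[J] for its closed neighbourhood, m_k for the
   number of independent k-sets, A_k and B_k for the sums of |N[J]| and |N[J]|^2
   over them. Removing one vertex from an independent (k+1)-set, i.e. adding to
   an independent k-set J a vertex outside N[J], gives
     (k+1) m_(k+1) = n m_k - A_k   and   k A_(k+1) <= n A_k - B_k,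
   and Cauchy-Schwarz gives A_k^2 <= m_k B_k. Maximum independent sets are
   dominating, so A_alpha = n m_alpha, and a downward induction yields
   n k m_k <= alpha A_k for every k. Weighting level k by lam^(k+1), the sum of
   alpha A_k - n k m_k is alpha n lam P - n lam^2 P' - alpha lam P', which is the
   claimed inequality. For disjoint unions of K_r one has |N[J]| = r |J| and
   n = r alpha, so every term vanishes. *)

Lemma card_setD1S (T : finType) (I : {set T}) u : u \in I -> #|I :\ u|.+1 = #|I|.
Proof. by move=> uI; rewrite (cardsD1 u I) uI. Qed.

Section IndependentSets.
Variables (T : finType) (e : rel T).
Hypothesis simple_e : simple_graph e.

Definition nbhd (J : {set T}) : {set T} :=
  [set v | [exists u in J, (u == v) || e u v]].

Lemma independentP (J : {set T}) :
  reflect {in J &, forall x y, ~~ e x y} (independent e J).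
Proof.
apply: (iffP forall_inP) => [H x y xJ yJ | H x xJ].
  by move/forall_inP: (H x xJ) => /(_ y yJ).
by apply/forall_inP => y yJ; apply: H.
Qed.

Lemma independent0 : independent e set0.
Proof. by apply/independentP => x y; rewrite inE. Qed.

Lemma nbhdP (J : {set T}) v :
  reflect (exists2 u, u \in J & (u == v) || e u v) (v \in nbhd J).
Proof. by rewrite inE; apply: exists_inP. Qed.

Lemma nbhd0 : nbhd set0 = set0.
Proof. by apply/setP => v; rewrite !inE; apply/exists_inP => -[u]; rewrite inE. Qed.

Lemma sub_nbhd (J : {set T}) : J \subset nbhd J.
Proof. by apply/subsetP => v vJ; apply/nbhdP; exists v; rewrite ?eqxx. Qed.

Lemma independentU1 (J : {set T}) w :
  independent e (w |: J) && (w \notin J) = independent e J && (w \notin nbhd J).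
Proof.
case: simple_e => e_sym e_irr.
apply/andP/andP => [[/independentP wJ_ind wJ] | [/independentP J_ind wN]].
  split.
    by apply/independentP => x y xJ yJ; apply: wJ_ind; rewrite inE ?xJ ?yJ orbT.
  apply/nbhdP => -[u uJ /orP [/eqP uw | euw]]; first by rewrite -uw uJ in wJ.
  by move: (wJ_ind u w); rewrite !inE uJ eqxx orbT euw => /(_ isT isT).
split; last by apply: contra wN => /(subsetP (sub_nbhd J)).
have adj_w x : x \in J -> ~~ e x w.
  by move=> xJ; apply: contra wN => exw; apply/nbhdP; exists x; rewrite ?exw ?orbT.
apply/independentP => x y; rewrite !inE => /orP [/eqP -> | xJ] /orP [/eqP -> | yJ].
- by rewrite e_irr.
- by rewrite e_sym adj_w.
- exact: adj_w.
- exact: J_ind.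
Qed.

(* A vertex of [nbhd I] lies in [nbhd (I :\ u)] for every [u \in I] except
   possibly the single witness of its membership. *)
Lemma sum_card_nbhd_setD1 (I : {set T}) :
  #|I|.-1 * #|nbhd I| <= \sum_(u in I) #|nbhd (I :\ u)|.
Proof.
pose S v := [set u in I | v \in nbhd (I :\ u)].
have -> : \sum_(u in I) #|nbhd (I :\ u)| = \sum_v #|S v|.
  rewrite (eq_bigr (fun u => \sum_v (v \in nbhd (I :\ u)) : nat)); last first.
    by move=> u _; rewrite -sum1_card big_mkcond.
  rewrite exchange_big /=; apply: eq_bigr => v _.
  rewrite -sum1_card [RHS]big_mkcond [LHS]big_mkcond /=.
  by apply: eq_bigr => u _; rewrite /S inE; case: (u \in I).
rewrite mulnC -sum_nat_const big_mkcond /=; apply: leq_sum => v _.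
case: ifP => // /nbhdP [u0 u0I u0v].
rewrite (cardsD1 u0 I) u0I add1n /=; apply: subset_leq_card; apply/subsetP => u.
rewrite /S inE => /setD1P [uu0 ->]; apply/nbhdP; exists u0 => //.
by rewrite !inE eq_sym uu0.
Qed.

Lemma card_le_indep_num (J : {set T}) : independent e J -> #|J| <= indep_num e.
Proof.
by move=> J_ind; apply: (@leq_bigmax_cond _ (independent e) (fun J : {set T} => #|J|)).
Qed.

Lemma indep_num_attained : exists2 J, independent e J & #|J| = indep_num e.
Proof.
exists [arg max_(J > set0 | independent e J) #|J|].
  by case: arg_maxnP; first exact: independent0.
by rewrite /indep_num (bigop.bigmax_eq_arg set0 independent0).
Qed.

Lemma nbhd_maximum (J : {set T}) :
  independent e J -> #|J| = indep_num e -> nbhd J = setT.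
Proof.
move=> J_ind J_max; apply/setP => v; rewrite in_setT; apply: contraT => vN.
have /andP [vJ_ind vJ] : independent e (v |: J) && (v \notin J).
  by rewrite independentU1 J_ind vN.
by have := card_le_indep_num vJ_ind; rewrite cardsU1 vJ J_max ltnn.
Qed.

Lemma card_nbhd_union_of_K r (J : {set T}) :
  disjoint_union_of_K e r -> independent e J -> #|nbhd J| = r * #|J|.
Proof.
move=> [m [f [e_f card_f]]] /independentP J_ind.
have nbhdE v : (v \in nbhd J) = [exists u in J, f u == f v].
  apply/nbhdP/exists_inP => -[u uJ uv]; exists u => //.
    by case/orP: uv => [/eqP -> | ]; rewrite ?eqxx // e_f => /andP [].
  by rewrite e_f uv andbT orbN.
have fiber v : #|[set u in J | f u == f v]| = (v \in nbhd J) :> nat.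
  rewrite nbhdE; case: exists_inP => [[u0 u0J fu0] | no_u].
    apply/eqP; rewrite eqn_leq; apply/andP; split.
      apply/card_le1_eqP => x y; rewrite !inE => /andP [xJ /eqP fx] /andP [yJ /eqP fy].
      apply/eqP; apply: contraT => xy; move: (J_ind x y xJ yJ).
      by rewrite e_f eq_sym xy fx fy eqxx.
    by apply/card_gt0P; exists u0; rewrite inE u0J fu0.
  apply/eqP; rewrite cards_eq0; apply/eqP/setP => u; rewrite !inE.
  by apply/negbTE/andP => -[uJ fu]; apply: no_u; exists u.
transitivity (\sum_v #|[set u in J | f u == f v]|).
  by rewrite -sum1_card big_mkcond; apply: eq_bigr => v _; rewrite fiber; case: (v \in _).
under eq_bigr do rewrite -sum1_card big_mkcond /=.
rewrite exchange_big /= mulnC -sum_nat_const [RHS]big_mkcond /=.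
apply: eq_bigr => u _; case: (boolP (u \in J)) => uJ.
  rewrite -(card_f u) -sum1_card [RHS]big_mkcond /=; apply: eq_bigr => v _.
  by rewrite !inE uJ eq_sym.
by apply: big1 => v _; rewrite inE (negbTE uJ).
Qed.

Local Open Scope ring_scope.

Lemma sum_indep_setD1 (R : nmodType) (F : {set T} -> R) :
  \sum_(I | independent e I) \sum_(u in I) F (I :\ u)
  = \sum_(J | independent e J) F J *+ #|~: nbhd J|.
Proof.
under [RHS]eq_bigr do rewrite -sumr_const.
rewrite !pair_big_dep.
rewrite (reindex_onto (fun p => (p.2 |: p.1, p.2)) (fun p => (p.1 :\ p.2, p.2))) /=;
  last by move=> [I u] /andP [_ uI]; rewrite setD1K.
apply: eq_big => [[J w] | [J w] /andP [_ /eqP [->]]] //=.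
rewrite setU11 andbT xpair_eqE eqxx andbT in_setC -independentU1.
case wJ: (w \in J); last by rewrite setU1K ?wJ ?eqxx ?andbT.
rewrite andbF; case: eqP; rewrite ?andbF // => /setP /(_ w).
by rewrite !inE eqxx wJ.
Qed.

End IndependentSets.

Local Open Scope ring_scope.

Lemma cauchy_schwarz_weighted (R : realFieldType) (I : finType) (P : pred I) (w a : I -> R) :
  (forall i, 0 <= w i) ->
  (\sum_(i | P i) w i * a i) ^+ 2
    <= (\sum_(i | P i) w i) * (\sum_(i | P i) w i * a i ^+ 2).
Proof.
move=> w_ge0.
set X := \sum_(i | P i) w i; set Y := \sum_(i | P i) w i * a i ^+ 2.
set Z := \sum_(i | P i) w i * a i.
have : 0 <= \sum_(i | P i) \sum_(j | P j) w i * w j * (a i - a j) ^+ 2.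
  by do 2!apply: sumr_ge0 => ? _; rewrite mulr_ge0 ?sqr_ge0 ?mulr_ge0.
have -> : \sum_(i | P i) \sum_(j | P j) w i * w j * (a i - a j) ^+ 2 = 2 * (X * Y - Z ^+ 2).
  transitivity (\sum_(i | P i) (w i * a i ^+ 2 * X + w i * Y - 2 * (w i * a i * Z))).
    apply: eq_bigr => i _; rewrite /X /Y /Z !mulr_sumr -big_split -sumrB /=.
    by apply: eq_bigr => j _; ring.
  by rewrite sumrB big_split /= -!mulr_sumr -!mulr_suml -/X -/Y -/Z; ring.
by move=> h; nra.
Qed.

(* One step of the downward induction: [m, A, B] are the level-[k] sums and
   [m', A'] the level-[k+1] ones. Multiplying the level-[k+1] bound by [k m] and
   chaining the three relations gives [n k m (n m - A) <= a A (n m - A)]. *)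
Lemma level_bound_step (R : realFieldType) (n a k m m' A A' B : R) :
  0 <= m -> 0 <= m' -> 0 <= k -> k <= a -> 0 <= n ->
  n * (k + 1) * m' <= a * A' -> (k + 1) * m' = n * m - A ->
  k * A' <= n * A - B -> A ^+ 2 <= m * B -> n * k * m <= a * A.
Proof.
move=> m0 m'0 k0 ka n0 bound' rec grow cs.
have a0 : 0 <= a by apply: le_trans ka.
have : 0 <= n * m - A by rewrite -rec mulr_ge0 ?addr_ge0.
rewrite le_eqVlt => /orP [/eqP D0 | Dpos].
  have ak : 0 <= a - k by rewrite subr_ge0.
  have := mulr_ge0 (mulr_ge0 n0 m0) ak; nra.
have h1 := ler_wpM2l (mulr_ge0 k0 m0) bound'.
have h2 := ler_wpM2l (mulr_ge0 a0 m0) grow.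
have h3 := ler_wpM2l a0 cs.
rewrite -(ler_pM2r Dpos) -rec; nra.
Qed.

Section Levels.
Variables (T : finType) (e : rel T) (R : realFieldType).
Hypothesis simple_e : simple_graph e.

Local Notation n := (#|T|%:R : R).
Local Notation alpha := (indep_num e).

Definition size_indicator k (J : {set T}) : R := (#|J| == k)%:R.

Definition num_indep k : R := \sum_(J | independent e J) size_indicator k J.

Definition sum_card_nbhd k : R :=
  \sum_(J | independent e J) size_indicator k J * #|nbhd e J|%:R.

Definition sum_sqr_card_nbhd k : R :=
  \sum_(J | independent e J) size_indicator k J * #|nbhd e J|%:R ^+ 2.

Lemma size_indicator_ge0 k J : 0 <= size_indicator k J.
Proof. exact: ler0n. Qed.

Lemma size_indicator_setD1 k (I : {set T}) u :
  u \in I -> size_indicator k (I :\ u) = size_indicator k.+1 I.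
Proof. by move=> uI; rewrite /size_indicator -(card_setD1S uI). Qed.

Lemma card_setC_nbhd J : #|~: nbhd e J|%:R = n - #|nbhd e J|%:R.
Proof. by rewrite -(cardsC (nbhd e J)) natrD addrAC subrr add0r. Qed.

Lemma num_indep_succ k : k.+1%:R * num_indep k.+1 = n * num_indep k - sum_card_nbhd k.
Proof.
transitivity (\sum_(I | independent e I) \sum_(u in I) size_indicator k (I :\ u)).
  rewrite /num_indep mulr_sumr; apply: eq_bigr => I _.
  under eq_bigr => u uI do rewrite size_indicator_setD1 //.
  rewrite sumr_const.
  by rewrite /size_indicator; case: eqP => [->|]; rewrite ?mulr1 ?mulr0 ?mul0rn.
rewrite (sum_indep_setD1 simple_e) /num_indep /sum_card_nbhd mulr_sumr -sumrB.
by apply: eq_bigr => J _; rewrite -[LHS]mulr_natr card_setC_nbhd; ring.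
Qed.

Lemma sum_card_nbhd_succ k :
  k%:R * sum_card_nbhd k.+1 <= n * sum_card_nbhd k - sum_sqr_card_nbhd k.
Proof.
have -> : n * sum_card_nbhd k - sum_sqr_card_nbhd k =
    \sum_(I | independent e I) \sum_(u in I)
      size_indicator k (I :\ u) * #|nbhd e (I :\ u)|%:R.
  rewrite (sum_indep_setD1 simple_e (fun J => size_indicator k J * #|nbhd e J|%:R)).
  rewrite /sum_card_nbhd /sum_sqr_card_nbhd mulr_sumr -sumrB.
  by apply: eq_bigr => J _; rewrite -[RHS]mulr_natr card_setC_nbhd; ring.
rewrite /sum_card_nbhd mulr_sumr; apply: ler_sum => I _.
under eq_bigr => u uI do rewrite size_indicator_setD1 //.
rewrite -mulr_sumr /size_indicator.
have [cardI|_] := eqVneq #|I| k.+1; last by rewrite !mul0r mulr0.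
rewrite /= !mul1r -natr_sum -natrM ler_nat.
by have := sum_card_nbhd_setD1 e I; rewrite cardI.
Qed.

Lemma num_indep_ge0 k : 0 <= num_indep k.
Proof. by apply: sumr_ge0 => J _; apply: size_indicator_ge0. Qed.

Lemma sum_card_nbhd_sqr_le k : sum_card_nbhd k ^+ 2 <= num_indep k * sum_sqr_card_nbhd k.
Proof. by apply: cauchy_schwarz_weighted => J; apply: size_indicator_ge0. Qed.

Lemma size_indicator_gt_indep_num k J :
  independent e J -> (alpha < k)%N -> size_indicator k J = 0.
Proof.
move=> J_ind k_gt; rewrite /size_indicator; case: eqP => // cardJ.
by have := card_le_indep_num J_ind; rewrite cardJ leqNgt k_gt.
Qed.

Lemma sum_card_nbhd_indep_num : sum_card_nbhd alpha = n * num_indep alpha.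
Proof.
rewrite /sum_card_nbhd /num_indep mulr_sumr; apply: eq_bigr => J J_ind.
rewrite /size_indicator; case: eqP => [J_max | _]; last by rewrite mul0r mulr0.
by rewrite nbhd_maximum // cardsT mulr1 mul1r.
Qed.

Lemma num_indep_bound k : n * k%:R * num_indep k <= alpha%:R * sum_card_nbhd k.
Proof.
have [k_le | k_gt] := leqP k alpha; last first.
  rewrite /num_indep /sum_card_nbhd !big1 ?mulr0 // => J J_ind;
  by rewrite size_indicator_gt_indep_num ?mul0r.
rewrite -(subKn k_le); elim: (alpha - k)%N (leq_subr k alpha) => [_ | j IH j_lt].
  by rewrite subn0 sum_card_nbhd_indep_num mulrCA mulrA.
have succ := subnSK j_lt; move: (IH (ltnW j_lt)); rewrite -succ -natr1 => {}IH.
apply: (level_bound_step (num_indep_ge0 _) (num_indep_ge0 _) (ler0n _ _) _ (ler0n _ _) IH).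
- by rewrite ler_nat leq_subr.
- by rewrite -num_indep_succ natr1.
- exact: sum_card_nbhd_succ.
- exact: sum_card_nbhd_sqr_le.
Qed.

Lemma sum_indep_by_size (F : {set T} -> R) :
  \sum_(J | independent e J) F J
  = \sum_(k < #|T|.+1) \sum_(J | independent e J) size_indicator k J * F J.
Proof.
rewrite exchange_big /=; apply: eq_bigr => J _; rewrite -mulr_suml.
have cardJ : (#|J| < #|T|.+1)%N by rewrite ltnS max_card.
rewrite (bigD1 (Ordinal cardJ)) //= big1 ?addr0 ?/size_indicator ?eqxx ?mul1r // => k.
by rewrite -val_eqE /= eq_sym => /negbTE ->.
Qed.

Definition hardcore_gap (lam : R) : R :=
  \sum_(J | independent e J) lam ^+ #|J|.+1 * (alpha%:R * #|nbhd e J|%:R - n * #|J|%:R).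

Lemma hardcore_gap_ge0 lam : 0 <= lam -> 0 <= hardcore_gap lam.
Proof.
move=> lam0; rewrite /hardcore_gap sum_indep_by_size; apply: sumr_ge0 => k _.
have -> : \sum_(J | independent e J) size_indicator k J *
            (lam ^+ #|J|.+1 * (alpha%:R * #|nbhd e J|%:R - n * #|J|%:R))
    = lam ^+ k.+1 * (alpha%:R * sum_card_nbhd k - n * k%:R * num_indep k).
  rewrite /sum_card_nbhd /num_indep !mulr_sumr -sumrB mulr_sumr; apply: eq_bigr => J _.
  by rewrite /size_indicator; case: eqP => [-> | _] /=; ring.
by rewrite mulr_ge0 ?exprn_ge0 // subr_ge0 num_indep_bound.
Qed.

Lemma hardcore_gap_union_of_K r lam : disjoint_union_of_K e r -> hardcore_gap lam = 0.
Proof.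
move=> Kr; have [J0 J0_ind J0_max] := indep_num_attained e.
have n_eq : n = (r * alpha)%:R.
  rewrite -cardsT -(nbhd_maximum simple_e J0_ind J0_max).
  by rewrite (card_nbhd_union_of_K Kr J0_ind) J0_max.
rewrite /hardcore_gap big1 // => J J_ind.
by rewrite (card_nbhd_union_of_K Kr J_ind) n_eq !natrM; ring.
Qed.

Local Notation P := (indep_poly R e).

Lemma horner_indep_poly lam : P.[lam] = \sum_(J | independent e J) lam ^+ #|J|.
Proof. by rewrite horner_sum; apply: eq_bigr => J _; rewrite hornerXn. Qed.

Lemma mul_horner_deriv_indep_poly lam :
  lam * P^`().[lam] = \sum_(J | independent e J) #|J|%:R * lam ^+ #|J|.
Proof.
rewrite raddf_sum horner_sum mulr_sumr; apply: eq_bigr => J _.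
rewrite [X in X.[lam]]/= derivXn hornerMn hornerXn -mulr_natl.
by case: #|J| => [|k] /=; rewrite ?mul0r ?mulr0 // exprS; ring.
Qed.

Lemma mul_horner_deriv_indep_poly_nbhd lam :
  lam * P^`().[lam] = \sum_(J | independent e J) #|~: nbhd e J|%:R * lam ^+ #|J|.+1.
Proof.
rewrite mul_horner_deriv_indep_poly.
transitivity (\sum_(I | independent e I) \sum_(u in I) lam ^+ #|I :\ u|.+1).
  apply: eq_bigr => I _; under eq_bigr => u uI do rewrite card_setD1S //.
  by rewrite sumr_const mulr_natl.
rewrite (sum_indep_setD1 simple_e (fun J => lam ^+ #|J|.+1)).
by apply: eq_bigr => J _; rewrite mulr_natl.
Qed.

Lemma horner_indep_poly_gt0 lam : 0 <= lam -> 0 < P.[lam].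
Proof.
move=> lam0; rewrite horner_indep_poly (bigD1 set0) ?independent0 //= cards0 expr0.
by rewrite ltr_pwDl // sumr_ge0 // => J _; rewrite exprn_ge0.
Qed.

Lemma mul_horner_deriv_indep_poly_gt0 lam :
  0 < lam -> (0 < #|T|)%N -> 0 < lam * P^`().[lam].
Proof.
move=> lam_gt0 T_gt0.
rewrite mul_horner_deriv_indep_poly_nbhd (bigD1 set0) ?independent0 //=.
rewrite nbhd0 setC0 cardsT cards0 expr1 ltr_pwDl ?mulr_gt0 ?ltr0n //.
by apply: sumr_ge0 => J _; rewrite mulr_ge0 ?exprn_ge0 ?ler0n ?ltW.
Qed.

Lemma hardcore_gapE lam :
  hardcore_gap lam = alpha%:R * n * (lam * P.[lam]) - n * (lam * (lam * P^`().[lam]))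
                     - alpha%:R * (lam * P^`().[lam]).
Proof.
rewrite [in lam * (lam * _)]mul_horner_deriv_indep_poly mul_horner_deriv_indep_poly_nbhd.
rewrite horner_indep_poly !mulr_sumr -!sumrB; apply: eq_bigr => J _.
by rewrite card_setC_nbhd exprS; ring.
Qed.

Lemma avg_indep_ratio_gap lam : 0 < lam -> (0 < #|T|)%N ->
  alpha%:R / avg_indep e lam - (1 + alpha%:R / (lam * n))
    = hardcore_gap lam / (lam * n * (lam * P^`().[lam])).
Proof.
move=> lam_gt0 T_gt0.
have p_gt0 := horner_indep_poly_gt0 (ltW lam_gt0).
have d_gt0 := mul_horner_deriv_indep_poly_gt0 lam_gt0 T_gt0.
have n_gt0 : 0 < n by rewrite ltr0n.
have d_neq0 : P^`().[lam] != 0 by apply: contraTneq d_gt0 => ->; rewrite mulr0 ltxx.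
by rewrite hardcore_gapE /avg_indep; field; rewrite d_neq0 !gt_eqF.
Qed.

End Levels.

Theorem theorem5p6 (R : realFieldType) (T : finType) (e : rel T)
    (HG : simple_graph e) (Hn : (1 <= #|T|)%N) (lam : R) (Hlam : 0 < lam) :
  1 + (indep_num e)%:R / (lam * #|T|%:R)
    <= (indep_num e)%:R / avg_indep e lam
  /\
  ((exists r : nat, (1 <= r)%N /\ disjoint_union_of_K e r) ->
    (indep_num e)%:R / avg_indep e lam
      = 1 + (indep_num e)%:R / (lam * #|T|%:R)).
Proof.
have ratio := avg_indep_ratio_gap HG Hlam Hn.
have den_gt0 : 0 < lam * #|T|%:R * (lam * (indep_poly R e)^`().[lam]).
  by rewrite mulr_gt0 ?mul_horner_deriv_indep_poly_gt0 // mulr_gt0 ?ltr0n.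
split; first by rewrite -subr_ge0 ratio divr_ge0 ?(hardcore_gap_ge0 HG) ?ltW.
move=> [r [_ Kr]]; apply/eqP.
by rewrite -subr_eq0 ratio (hardcore_gap_union_of_K HG lam Kr) mul0r.
Qed.
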